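(* For every integer $n\ge 0$, $$\Phi^{(2)}[aq^n; b, b'; c, c'; x, y] = \sum_{k=0}^n \sum_{i=0}^k \begin{bmatrix} n \\ k \end{bmatrix} \begin{bmatrix} k \\ i \end{bmatrix} \frac{(b; q)_{k-i} (b'; q)_i}{(c; q)_{k-i} (c'; q)_i} q^{2\binom{k}{2}} a^k x^{k-i} y^i\, \Phi^{(2)}[aq^k; bq^{k-i}, b'q^i; cq^{k-i}, c'q^i; xq^i, y]$$ and $$\Phi^{(2)}[aq^{-n}; b, b'; c, c'; x, y] = \sum_{k=0}^n \sum_{i=0}^k \begin{bmatrix} n \\ k \end{bmatrix} \begin{bmatrix} k \\ i \end{bmatrix} \frac{(b; q)_{k-i} (b'; q)_i}{(c; q)_{k-i} (c'; q)_i} q^{\binom{k}{2} - nk} (-a)^k x^{k-i} y^i\, \Phi^{(2)}[a; bq^{k-i}, b'q^i; cq^{k-i}, c'q^i; xq^i, y].$$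
   Context: Let $q$ be a complex number with $0<|q|<1$. For complex $z$ and integer $m\ge 0$, $(z;q)_m=\prod_{j=0}^{m-1}(1-zq^j)$, with $(z;q)_0=1$. For integers $0\le k\le n$, $\begin{bmatrix} n \\ k \end{bmatrix}=\frac{(q;q)_n}{(q;q)_k(q;q)_{n-k}}$ is the $q$-binomial coefficient. The $q$-Appell function $\Phi^{(2)}$ is $$\Phi^{(2)}[a; b, b'; c, c'; x, y] = \sum_{m, n \geq 0} \frac{(a; q)_{m+n} (b; q)_m (b'; q)_n}{(q; q)_m (q; q)_n (c; q)_m (c'; q)_n} x^m y^n.$$ Identities are understood as identities of power series in $x,y$ (formal, or convergent for small $|x|,|y|$), with complex parameters chosen so that no denominator occurring vanishes. *)

From mathcomp Require Import all_boot all_algebra.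
From mathcomp Require Export complex reals.
Set Implicit Arguments. Unset Strict Implicit. Unset Printing Implicit Defensive.
Import GRing.Theory Num.Theory.
Local Open Scope ring_scope.

Section Defs.
Variable F : fieldType.

Definition qpoch (z q : F) (m : nat) : F :=
  \prod_(j < m) (1 - z * q ^+ j).

Definition qbinom (q : F) (n k : nat) : F :=
  qpoch q q n / (qpoch q q k * qpoch q q (n - k)).

(* Bivariate formal power series in X, Y are represented by their coefficient
   functions: s m n = coefficient of X^m Y^n. *)

(* Coefficient of X^m Y^n in Phi^(2)[a; b, b'; c, c'; sx*X, sy*Y]. *)
Definition phi2 (q a b b' c c' sx sy : F) (m n : nat) : F :=
  qpoch a q (m + n) * qpoch b q m * qpoch b' q n
  / (qpoch q q m * qpoch q q n * qpoch c q m * qpoch c' q n)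
  * sx ^+ m * sy ^+ n.

(* Multiplication of a formal series s by the monomial X^u Y^v. *)
Definition mulXY (u v : nat) (s : nat -> nat -> F) (m n : nat) : F :=
  if (u <= m)%N && (v <= n)%N then s (m - u)%N (n - v)%N else 0.

End Defs.

(* Comparing coefficients of x^M y^N, every term carries the factor
   (b;q)_M (b';q)_N / ((q;q)_M (q;q)_N (c;q)_M (c';q)_N), and the sum over i
   collapses by the q-Chu-Vandermonde identity
     sum_i [k i] (q^(M-k+i+1);q)_(k-i) (q^(N-i+1);q)_i q^(i(M-k+i)) = (q^(M+N-k+1);q)_k.
   What remains are the one-variable expansions, for L = M + N,
     (a q^n;q)_L = sum_k [n k] q^(2 C(k,2)) a^k (q^(L-k+1);q)_k (a q^k;q)_(L-k),
     (b;q)_L     = sum_k [n k] q^(C(k,2)) (-b)^k (q^(L-k+1);q)_k (b q^n;q)_(L-k),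
   the second taken at b = a q^-n; both follow by induction on n from the
   two q-Pascal rules. *)

From mathcomp Require Import all_boot all_order all_algebra.
From mathcomp Require Import complex reals.
From mathcomp Require Import ring zify.
Import Order.TTheory GRing.Theory Num.Theory.
Set Implicit Arguments. Unset Strict Implicit.
Local Open Scope ring_scope.

Section QAnalogues.
Variables (F : fieldType) (q : F).
Implicit Types (z : F) (u v : nat -> F).

Lemma qpoch0 z : qpoch z q 0 = 1.
Proof. by rewrite /qpoch big_ord0. Qed.

Lemma qpochS z m : qpoch z q m.+1 = qpoch z q m * (1 - z * q ^+ m).
Proof. by rewrite /qpoch big_ord_recr. Qed.

Lemma qpochSl z m : qpoch z q m.+1 = (1 - z) * qpoch (z * q) q m.
Proof.
rewrite /qpoch big_ord_recl expr0 mulr1; congr (_ * _).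
by apply: eq_bigr => j _; rewrite lift0 exprS mulrA.
Qed.

Lemma qpochD z m p : qpoch z q (m + p) = qpoch z q m * qpoch (z * q ^+ m) q p.
Proof.
rewrite /qpoch big_split_ord; congr (_ * _).
by apply: eq_bigr => j _; rewrite exprD mulrA.
Qed.

(* [qfall L k] is (q^(L-k+1);q)_k, the q-analogue of the falling factorial
   L (L-1) ... (L-k+1); it vanishes for [k > L] through the factor [j = L]. *)
Definition qfall (L k : nat) : F := \prod_(j < k) (1 - q ^+ (L - j)).

Lemma qfall0 L : qfall L 0 = 1.
Proof. by rewrite /qfall big_ord0. Qed.

Lemma qfallS L k : qfall L k.+1 = qfall L k * (1 - q ^+ (L - k)).
Proof. by rewrite /qfall big_ord_recr. Qed.

Lemma qfallSS L k : qfall L.+1 k.+1 = (1 - q ^+ L.+1) * qfall L k.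
Proof. by rewrite /qfall big_ord_recl subn0. Qed.

Lemma qfall_gt L k : (L < k)%N -> qfall L k = 0.
Proof.
move=> ltLk; apply/eqP/prodf_eq0; exists (Ordinal ltLk) => //=.
by rewrite subnn expr0 subrr.
Qed.

Lemma qfall_qpoch L k : (k <= L)%N -> qfall L k * qpoch q q (L - k) = qpoch q q L.
Proof.
elim: k => [|k IHk] ltkL; first by rewrite qfall0 mul1r subn0.
rewrite qfallS -mulrA -IHk 1?ltnW //; congr (_ * _).
by rewrite -subnSK // qpochS -exprS mulrC.
Qed.

(* Unlike [qbinom], whose factor (q;q)_(n-k) uses truncated subtraction,
   [qbin n k] vanishes for [k > n]. *)
Definition qbin (n k : nat) : F := qfall n k / qpoch q q k.

Lemma qbin_gt n k : (n < k)%N -> qbin n k = 0.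
Proof. by move=> ltnk; rewrite /qbin qfall_gt ?mul0r. Qed.

Lemma qbinn0 n : qbin n 0 = 1.
Proof. by rewrite /qbin qfall0 qpoch0 divr1. Qed.

Lemma qfall_vandermonde_step M N k i : (i <= k)%N ->
  qfall M (k - i) * qfall N i * (q ^+ i) ^+ (M - (k - i)) * (1 - q ^+ (M + N - k))
  = q ^+ i * (qfall M (k.+1 - i) * qfall N i * (q ^+ i) ^+ (M - (k.+1 - i)))
    + qfall M (k - i) * qfall N i.+1 * (q ^+ i.+1) ^+ (M - (k - i)).
Proof.
move=> leik; rewrite subSn // !qfallS.
have [ltM|leM] := ltnP M (k - i); first by rewrite (qfall_gt ltM); ring.
have [ltN|leN] := ltnP N i; first by rewrite (qfall_gt ltN); ring.
have -> : (M + N - k = (M - (k - i)) + (N - i))%N by lia.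
rewrite subnS.
case: (M - (k - i))%N => [|r]; first by rewrite add0n !expr0 subrr; ring.
by rewrite [q ^+ i.+1]exprSr exprMn exprD [q ^+ i ^+ r.+1]exprS; ring.
Qed.

Hypothesis q_expS_neq1 : forall j, q ^+ j.+1 != 1.

Let onem_expS_neq0 j : 1 - q ^+ j.+1 != 0.
Proof. by rewrite subr_eq0 eq_sym. Qed.

Lemma qpoch_qq_neq0 m : qpoch q q m != 0.
Proof.
elim: m => [|m IHm]; first by rewrite qpoch0 oner_neq0.
by rewrite qpochS -exprS mulf_neq0.
Qed.

Lemma qbin_qbinom n k : (k <= n)%N -> qbin n k = qbinom q n k.
Proof.
move=> lekn; rewrite /qbin /qbinom -(qfall_qpoch lekn) [qpoch q q k * _]mulrC.
by rewrite invfM mulrA mulfK ?qpoch_qq_neq0.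
Qed.

Lemma qbinS n k : qbin n.+1 k.+1 = qbin n k + q ^+ k.+1 * qbin n k.+1.
Proof.
have [lekn|ltnk] := leqP k n; last by rewrite !qbin_gt ?mulr0 ?addr0 // ltnW.
have qn : q ^+ n.+1 = q ^+ k.+1 * q ^+ (n - k) by rewrite -exprD; congr (_ ^+ _); lia.
rewrite /qbin qfallSS qfallS qpochS -exprS qn.
by field; rewrite qpoch_qq_neq0 onem_expS_neq0.
Qed.

Lemma qbinS' n k : qbin n.+1 k.+1 = q ^+ (n - k) * qbin n k + qbin n k.+1.
Proof.
have [lekn|ltnk] := leqP k n; last by rewrite !qbin_gt ?mulr0 ?addr0 // ltnW.
have qn : q ^+ n.+1 = q ^+ k.+1 * q ^+ (n - k) by rewrite -exprD; congr (_ ^+ _); lia.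
rewrite /qbin qfallSS qfallS qpochS -exprS qn.
by field; rewrite qpoch_qq_neq0 onem_expS_neq0.
Qed.

Lemma qbin_sum_shift n v :
  v 0%N + \sum_(k < n.+1) qbin n k.+1 * v k.+1 = \sum_(k < n.+1) qbin n k * v k.
Proof.
rewrite -[v 0%N]mul1r -(qbinn0 n).
rewrite -(big_ord_recl _ (fun k : 'I_n.+2 => qbin n k * v k)) big_ord_recr /=.
by rewrite qbin_gt // mul0r addr0.
Qed.

Lemma qbin_sumS n u :
  \sum_(k < n.+2) qbin n.+1 k * u k
  = \sum_(k < n.+1) qbin n k * (q ^+ k * u k + u k.+1).
Proof.
rewrite big_ord_recl qbinn0 mul1r.
under eq_bigr => k _ do rewrite lift0 qbinS mulrDl -mulrA mulrCA.
rewrite big_split addrCA /= -[u 0%N]mul1r -(expr0 q).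
rewrite (qbin_sum_shift n (fun k => q ^+ k * u k)).
rewrite -big_split; apply: eq_bigr => k _ /=; ring.
Qed.

Lemma qbin_sumS' n u :
  \sum_(k < n.+2) qbin n.+1 k * u k
  = \sum_(k < n.+1) qbin n k * (u k + q ^+ (n - k) * u k.+1).
Proof.
rewrite big_ord_recl qbinn0 mul1r.
under eq_bigr => k _ do rewrite lift0 qbinS' mulrDl.
rewrite big_split addrCA /= qbin_sum_shift.
rewrite -big_split; apply: eq_bigr => k _ /=; ring.
Qed.

Lemma qfall_vandermonde M N k :
  \sum_(i < k.+1) qbin k i * (qfall M (k - i) * qfall N i * (q ^+ i) ^+ (M - (k - i)))
  = qfall (M + N) k.
Proof.
elim: k => [|k IHk]; first by rewrite big_ord1 qbinn0 !qfall0 expr1n !mul1r.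
rewrite (qbin_sumS k (fun i => qfall M (k.+1 - i) * qfall N i * (q ^+ i) ^+ (M - (k.+1 - i)))).
rewrite qfallS -IHk big_distrl /=; apply: eq_bigr => -[i /=]; rewrite ltnS => leik _.
by rewrite subSS -[RHS]mulrA qfall_vandermonde_step.
Qed.

Lemma qpoch_upshift_step a L k :
  q ^+ (2 * 'C(k, 2)) * (a * q) ^+ k * (qfall L k * qpoch (a * q * q ^+ k) q (L - k))
  = q ^+ k * (q ^+ (2 * 'C(k, 2)) * a ^+ k * (qfall L k * qpoch (a * q ^+ k) q (L - k)))
    + q ^+ (2 * 'C(k.+1, 2)) * a ^+ k.+1
      * (qfall L k.+1 * qpoch (a * q ^+ k.+1) q (L - k.+1)).
Proof.
have -> : q ^+ (2 * 'C(k.+1, 2)) = q ^+ (2 * 'C(k, 2)) * q ^+ k * q ^+ k.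
  by rewrite -!exprD binS bin1; congr (_ ^+ _); lia.
rewrite qfallS exprMn -[a * q * _]mulrA -exprS.
have [leLk|ltkL] := leqP L k.
  have -> : (L - k = 0)%N by lia.
  by rewrite expr0 subrr !qpoch0; ring.
have -> : (L - k = (L - k.+1).+1)%N by lia.
rewrite qpochS qpochSl -[a * q ^+ k * q]mulrA -exprSr.
by rewrite !exprS; ring.
Qed.

Lemma qpoch_upshift n a L :
  qpoch (a * q ^+ n) q L
  = \sum_(k < n.+1)
      qbin n k * (q ^+ (2 * 'C(k, 2)) * a ^+ k * (qfall L k * qpoch (a * q ^+ k) q (L - k))).
Proof.
elim: n a => [|n IHn] a.
  by rewrite big_ord1 qbinn0 qfall0 subn0 !expr0 !mul1r.
rewrite exprS mulrA IHn (qbin_sumS n (fun k =>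
  q ^+ (2 * 'C(k, 2)) * a ^+ k * (qfall L k * qpoch (a * q ^+ k) q (L - k)))).
by apply: eq_bigr => k _; rewrite qpoch_upshift_step.
Qed.
Lemma qpoch_expand_shifted_step n b L k : (k <= n)%N ->
  q ^+ 'C(k, 2) * (- b) ^+ k * (qfall L k * qpoch (b * q ^+ n.+1) q (L - k))
  + q ^+ (n - k) * (q ^+ 'C(k.+1, 2) * (- b) ^+ k.+1
                    * (qfall L k.+1 * qpoch (b * q ^+ n.+1) q (L - k.+1)))
  = q ^+ 'C(k, 2) * (- b) ^+ k * (qfall L k * qpoch (b * q ^+ n) q (L - k)).
Proof.
move=> lekn; have qn : q ^+ n = q ^+ (n - k) * q ^+ k by rewrite -exprD subnK.
rewrite binS bin1 exprD qfallS.
have [leLk|ltkL] := leqP L k.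
  have -> : (L - k = 0)%N by lia.
  by rewrite expr0 subrr !qpoch0; ring.
have -> : (L - k = (L - k.+1).+1)%N by lia.
rewrite qpochS qpochSl -[b * q ^+ n * q]mulrA -exprSr.
by rewrite !exprS qn; ring.
Qed.

Lemma qpoch_expand_shifted n b L :
  qpoch b q L
  = \sum_(k < n.+1)
      qbin n k * (q ^+ 'C(k, 2) * (- b) ^+ k * (qfall L k * qpoch (b * q ^+ n) q (L - k))).
Proof.
elim: n => [|n IHn]; first by rewrite big_ord1 qbinn0 qfall0 subn0 !expr0 !mul1r mulr1.
rewrite IHn (qbin_sumS' n (fun k =>
  q ^+ 'C(k, 2) * (- b) ^+ k * (qfall L k * qpoch (b * q ^+ n.+1) q (L - k)))).
by apply: eq_bigr => -[k /=]; rewrite ltnS => lekn _; rewrite qpoch_expand_shifted_step.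
Qed.

Lemma qpoch_downshift n a L : q != 0 ->
  qpoch (a / q ^+ n) q L
  = \sum_(k < n.+1)
      qbin n k * (q ^+ 'C(k, 2) / q ^+ (n * k) * (- a) ^+ k * (qfall L k * qpoch a q (L - k))).
Proof.
move=> q_neq0; rewrite (qpoch_expand_shifted n) divfK ?expf_neq0 //.
by apply: eq_bigr => k _; rewrite -mulNr expr_div_n exprM; field; rewrite !expf_neq0.
Qed.

Definition phi2_weight (b b' c c' : F) (M N : nat) : F :=
  qpoch b q M * qpoch b' q N / (qpoch q q M * qpoch q q N * qpoch c q M * qpoch c' q N).

Lemma phi2E a b b' c c' M N :
  phi2 q a b b' c c' 1 1 M N = qpoch a q (M + N) * phi2_weight b b' c c' M N.
Proof. by rewrite /phi2 /phi2_weight !expr1n !mulr1 !mulrA. Qed.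

Variables (b b' c c' : F).
Hypotheses (c_neq0 : forall m, qpoch c q m != 0) (c'_neq0 : forall m, qpoch c' q m != 0).

Lemma phi2_shift_coef A k i M N : (i <= k)%N ->
  qbinom q k i * (qpoch b q (k - i) * qpoch b' q i / (qpoch c q (k - i) * qpoch c' q i))
  * mulXY (k - i) i (phi2 q A (b * q ^+ (k - i)) (b' * q ^+ i)
                       (c * q ^+ (k - i)) (c' * q ^+ i) (q ^+ i) 1) M N
  = phi2_weight b b' c c' M N * qpoch A q (M + N - k)
    * (qbin k i * (qfall M (k - i) * qfall N i * (q ^+ i) ^+ (M - (k - i)))).
Proof.
move=> leik; rewrite (qbin_qbinom leik) /mulXY.
case: ifP => [/andP[leM leN] | /negbT]; last first.
  by rewrite negb_and -!ltnNge => /orP[/qfall_gt -> | /qfall_gt ->]; ring.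
have [M' ->] : exists M', M = (k - i + M')%N by exists (M - (k - i))%N; lia.
have [N' ->] : exists N', N = (i + N')%N by exists (N - i)%N; lia.
have -> : (k - i + M' + (i + N') - k = M' + N')%N by lia.
have qfall_div L p : qfall (p + L) p = qpoch q q (p + L) / qpoch q q L.
  by rewrite -(qfall_qpoch (leq_addr L p)) addKn mulfK ?qpoch_qq_neq0.
have := c_neq0 (k - i + M'); have := c'_neq0 (i + N').
rewrite (qpochD c) (qpochD c') !mulf_eq0 !negb_or => /andP[c'1 c'2] /andP[c1 c2].
rewrite !addKn !qfall_div /phi2 /phi2_weight expr1n mulr1.
rewrite (qpochD b) (qpochD b') (qpochD c) (qpochD c').
by field; rewrite c1 c2 c'1 c'2 !qpoch_qq_neq0.
Qed.

Lemma phi2_shift_sum n (w A : nat -> F) M N :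
  \sum_(k < n.+1) \sum_(i < k.+1)
     qbinom q n k * qbinom q k i
     * (qpoch b q (k - i) * qpoch b' q i / (qpoch c q (k - i) * qpoch c' q i)) * w k
     * mulXY (k - i) i (phi2 q (A k) (b * q ^+ (k - i)) (b' * q ^+ i)
                          (c * q ^+ (k - i)) (c' * q ^+ i) (q ^+ i) 1) M N
  = phi2_weight b b' c c' M N
    * \sum_(k < n.+1) qbin n k * (w k * (qfall (M + N) k * qpoch (A k) q (M + N - k))).
Proof.
rewrite big_distrr; apply: eq_bigr => -[k /=]; rewrite ltnS => lekn _.
rewrite (eq_bigr (fun i : 'I_k.+1 =>
  qbinom q n k * w k * (phi2_weight b b' c c' M N * qpoch (A k) q (M + N - k)
  * (qbin k i * (qfall M (k - i) * qfall N i * (q ^+ i) ^+ (M - (k - i))))))); last first.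
  by move=> -[i /=]; rewrite ltnS => leik _; rewrite -(phi2_shift_coef _ _ _ leik); ring.
by rewrite -big_distrr -big_distrr /= qfall_vandermonde (qbin_qbinom lekn); ring.
Qed.
End QAnalogues.

Lemma norm_lt1_expS_neq1 (F : numFieldType) (q : F) : `|q| < 1 -> forall j, q ^+ j.+1 != 1.
Proof.
move=> q_lt1 j; apply/eqP => qj1; move: q_lt1.
by rewrite -(expr_lt1 (ltn0Sn j) (normr_ge0 q)) -normrX qj1 normr1 ltxx.
Qed.

Theorem theorem7 (R : realType) (q a b b' c c' : R[i]) (n : nat) :
  0 < `|q| -> `|q| < 1 ->
  (forall m : nat, qpoch c q m != 0) ->
  (forall m : nat, qpoch c' q m != 0) ->
  (forall M N : nat,
     phi2 q (a * q ^+ n) b b' c c' 1 1 M N =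
     \sum_(k < n.+1) \sum_(i < k.+1)
       qbinom q n k * qbinom q k i
       * (qpoch b q (k - i) * qpoch b' q i / (qpoch c q (k - i) * qpoch c' q i))
       * q ^+ (2 * 'C(k, 2)) * a ^+ k
       * mulXY (k - i) i
           (phi2 q (a * q ^+ k) (b * q ^+ (k - i)) (b' * q ^+ i)
                 (c * q ^+ (k - i)) (c' * q ^+ i) (q ^+ i) 1) M N)
  /\
  (forall M N : nat,
     phi2 q (a / q ^+ n) b b' c c' 1 1 M N =
     \sum_(k < n.+1) \sum_(i < k.+1)
       qbinom q n k * qbinom q k i
       * (qpoch b q (k - i) * qpoch b' q i / (qpoch c q (k - i) * qpoch c' q i))
       * (q ^+ 'C(k, 2) / q ^+ (n * k)) * (- a) ^+ k
       * mulXY (k - i) i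
           (phi2 q a (b * q ^+ (k - i)) (b' * q ^+ i)
                 (c * q ^+ (k - i)) (c' * q ^+ i) (q ^+ i) 1) M N).
Proof.
move=> q_gt0 q_lt1 c_neq0 c'_neq0.
have q_neq0 : q != 0 by rewrite -normr_gt0.
have qS_neq1 := norm_lt1_expS_neq1 q_lt1.
split=> M N.
- under eq_bigr => k _ do under eq_bigr => i _ do rewrite -[_ * a ^+ k]mulrA.
  rewrite (phi2_shift_sum qS_neq1 b b' c_neq0 c'_neq0 n
    (fun k => q ^+ (2 * 'C(k, 2)) * a ^+ k) (fun k => a * q ^+ k)).
  by rewrite phi2E (qpoch_upshift qS_neq1) mulrC.
- under eq_bigr => k _ do under eq_bigr => i _ do rewrite -[_ * (- a) ^+ k]mulrA.
  rewrite (phi2_shift_sum qS_neq1 b b' c_neq0 c'_neq0 n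
    (fun k => q ^+ 'C(k, 2) / q ^+ (n * k) * (- a) ^+ k) (fun=> a)).
  by rewrite phi2E (qpoch_downshift qS_neq1) // mulrC.
Qed.
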